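(* Let $\langle A,f,g\rangle$ be a binary PS-algebra and define $d\colon A\to A$ by $d(a)=f(a,a)+-g(a,a)$. Then $d$ is the unary discriminator on $A$ (i.e. $d(0)=0$ and $d(a)=1$ for all $a\neq0$) if and only if for all $a,b\in A$, $a\cdot b\neq0$ implies $g(a,b)\leq f(a,b)$.
   Context: A PS-algebra is $\langle A,f,g\rangle$ where $A$ is a Boolean algebra with at least two elements (operations $+,\cdot,-,0,1$) and $f,g\colon A^2\to A$ satisfy: $f(x,y)=0$ whenever $x=0$ or $y=0$; $f$ is additive in each argument; $g(x,y)=1$ whenever $x=0$ or $y=0$; $g$ is co-additive in each argument ($g(x+x',y)=g(x,y)\cdot g(x',y)$, $g(x,y+y')=g(x,y)\cdot g(x,y')$). *)

From mathcomp Require Import all_boot all_order.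
Set Implicit Arguments. Unset Strict Implicit. Unset Printing Implicit Defensive.
Import Order.Theory.
Local Open Scope order_scope.

(* A Boolean algebra is a complemented distributive lattice with top and
   bottom (MathComp: ctbDistrLatticeType). Operations: + = join `|`,
   . = meet `&`, - = complement ~`, 0 = \bot, 1 = \top. *)

Definition is_PS_algebra (disp : Order.disp_t) (A : ctbDistrLatticeType disp)
  (f g : A -> A -> A) : Prop :=
  (\bot : A) != \top /\
      (forall x y : A, x = \bot \/ y = \bot -> f x y = \bot) /\
      (forall x x' y : A, f (x `|` x') y = f x y `|` f x' y) /\
      (forall x y y' : A, f x (y `|` y') = f x y `|` f x y') /\
      (forall x y : A, x = \bot \/ y = \bot -> g x y = \top) /\
      (forall x x' y : A, g (x `|` x') y = g x y `&` g x' y) /\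
      (forall x y y' : A, g x (y `|` y') = g x y `&` g x y').

Definition unary_discriminator (disp : Order.disp_t) (A : ctbDistrLatticeType disp)
  (d : A -> A) : Prop :=
  d \bot = \bot /\ (forall a : A, a != \bot -> d a = \top).

(* Since d(a) = f(a,a) + -g(a,a), the equation d(a) = 1 says exactly
   g(a,a) <= f(a,a), and d(0) = 0 holds in every PS-algebra.  Additivity makes
   f monotone and co-additivity makes g antitone in each argument, so for
   c = a.b we get g(a,b) <= g(c,c) and f(c,c) <= f(a,b); hence the diagonal
   inequality at c != 0 yields g(a,b) <= f(a,b). *)

From mathcomp Require Import all_boot all_order.
Set Implicit Arguments. Unset Strict Implicit. Unset Printing Implicit Defensive.
Import Order.Theory.
Local Open Scope order_scope.

Section LatticeMaps.
Variables (disp disp' : Order.disp_t) (L : latticeType disp) (M : latticeType disp').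

Lemma homo_le_join_morph (h : L -> M) :
  {morph h : x y / x `|` y} -> {homo h : x y / x <= y}.
Proof. by move=> hU x y /join_idPr <-; rewrite hU leUl. Qed.

Lemma homo_ge_join_meet_morph (h : L -> M) :
  {morph h : x y / x `|` y >-> x `&` y} -> {homo h : x y /~ x <= y}.
Proof. by move=> hU x y /join_idPr <-; rewrite hU leIl. Qed.

End LatticeMaps.

Lemma joinC_eq1 (disp : Order.disp_t) (A : ctbDistrLatticeType disp) (x y : A) :
  (y `|` ~` x == \top) = (x <= y).
Proof.
by rewrite -(inj_eq compl_inj) complU complK compl1 meetC disj_leC complK.
Qed.

Section PSMonotonicity.
Variables (disp : Order.disp_t) (A : ctbDistrLatticeType disp) (f g : A -> A -> A).
Hypotheses (fDl : forall x x' y, f (x `|` x') y = f x y `|` f x' y)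
           (fDr : forall x y y', f x (y `|` y') = f x y `|` f x y')
           (gDl : forall x x' y, g (x `|` x') y = g x y `&` g x' y)
           (gDr : forall x y y', g x (y `|` y') = g x y `&` g x y').

Lemma le_PS_meet_diag (a b : A) :
  g (a `&` b) (a `&` b) <= f (a `&` b) (a `&` b) -> g a b <= f a b.
Proof.
pose c := a `&` b; move=> le_gf_c.
have g_ab_cb : g a b <= g c b :=
  homo_ge_join_meet_morph (fun x x' => gDl x x' b) (leIl a b).
have g_cb_cc : g c b <= g c c := homo_ge_join_meet_morph (gDr c) (leIr b a).
have f_cc_ac : f c c <= f a c :=
  homo_le_join_morph (fun x x' => fDl x x' c) (leIl a b).
have f_ac_ab : f a c <= f a b := homo_le_join_morph (fDr a) (leIr b a).
apply: le_trans g_ab_cb (le_trans g_cb_cc _).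
exact: le_trans le_gf_c (le_trans f_cc_ac f_ac_ab).
Qed.

End PSMonotonicity.

Theorem lemma35 (disp : Order.disp_t) (A : ctbDistrLatticeType disp)
  (f g : A -> A -> A) :
  is_PS_algebra f g ->
  (unary_discriminator (fun a : A => f a a `|` ~` (g a a)) <->
   (forall a b : A, a `&` b != \bot -> g a b <= f a b)).
Proof.
move=> [_ [f0 [fDl [fDr [g1 [gDl gDr]]]]]].
split=> [[_ d1] a b ab0 | le_gf].
  apply: (le_PS_meet_diag fDl fDr gDl gDr).
  by rewrite -joinC_eq1 (d1 _ ab0).
split=> [|a a0].
  by rewrite f0 ?g1 ?compl1 ?joinx0 //; left.
by apply/eqP; rewrite joinC_eq1 le_gf // meetxx.
Qed.
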